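(* Let $(n_i)_{i\ge1}$ be positive integers and let $(k^{(E)}_i)$, $(k^{(F)}_i)$ be sequences of positive integers such that $\lim_{i\to\infty}\prod_{j\ge0}\frac{n_{i+j}}{n_{i+j}+k^{(E)}_{i+j}}=1$, $\lim_{i\to\infty}\prod_{j\ge0}\frac{n_{i+j}}{n_{i+j}+k^{(F)}_{i+j}}=1$, $\prod_{i\ge1}(n_i+k^{(E)}_i)=\prod_{i\ge1}(n_i+k^{(F)}_i)$ as supernatural numbers, and $\lim_{i\to\infty}\frac{(n_1+k^{(E)}_1)\cdots(n_i+k^{(E)}_i)}{(n_1+k^{(F)}_1)\cdots(n_i+k^{(F)}_i)}=1$. Then $(k^{(E)}_i)$ and $(k^{(F)}_i)$ are sufficiently close.
   Context: Definition (sufficiently close). Sequences $(k^{(E)}_i)$ and $(k^{(F)}_i)$ (relative to $(n_i)$) are sufficiently close if for every $\delta>0$ and every $N$: (i) there exist $i_1>i'_1\ge N$ such that $1-\prod_{j\ge0}\frac{n_{i'_1+j}}{n_{i'_1+j}+k^{(E)}_{i'_1+j}}<\delta$, $\prod_{i=1}^{i'_1-1}(n_i+k^{(E)}_i)$ divides $\prod_{i=1}^{i_1-1}(n_i+k^{(F)}_i)$, and $$\frac{(n_1+k^{(F)}_1)\cdots(n_{i'_1-1}+k^{(F)}_{i'_1-1})}{(n_1+k^{(E)}_1)\cdots(n_{i'_1-1}+k^{(E)}_{i'_1-1})}\cdot\frac{(n_{i'_1}+k^{(F)}_{i'_1})\cdots(n_{i_1-1}+k^{(F)}_{i_1-1})}{n_{i'_1}\cdots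 n_{i_1-1}}>1;$$ and (ii) the same holds with the roles of $E$ and $F$ interchanged (for some $i_2>i'_2\ge N$). *)

From HB Require Import structures.
From mathcomp Require Import all_boot all_order all_algebra.
From mathcomp Require Import all_classical all_reals all_analysis.
Set Implicit Arguments. Unset Strict Implicit. Unset Printing Implicit Defensive.
Import Order.TTheory GRing.Theory Num.Theory.
Import numFieldNormedType.Exports.
Local Open Scope ring_scope.

(* Sequences are nat -> nat, only indices >= 1 are used (the paper indexes from 1). *)

Definition tail_partial (R : realType) (n k : nat -> nat) (i m : nat) : R :=
  \prod_(i <= j < m) ((n j)%:R / (n j + k j)%:R).

(* Infinite product  prod_{j >= 0} n_{i+j} / (n_{i+j} + k_{i+j}),
   the limit of the (nonincreasing, nonnegative) partial products. *)
Definition tail_prod (R : realType) (n k : nat -> nat) (i : nat) : R :=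
  limn (tail_partial R n k i).

Definition pprod (a : nat -> nat) (m : nat) : nat := (\prod_(1 <= i < m) a i)%N.

(* The supernatural number prod_{i>=1} a_i: d divides it iff d divides a finite
   partial product. Two supernatural numbers are equal iff for every prime p
   they have the same p-exponent, i.e. for every e, p^e divides one iff it
   divides the other. *)
Definition supernat_dvd (d : nat) (a : nat -> nat) : Prop := exists m, (d %| pprod a m)%N.

Definition supernat_eq (a b : nat -> nat) : Prop :=
  forall p e : nat, prime p -> (supernat_dvd (p ^ e) a <-> supernat_dvd (p ^ e) b).

Definition suff_close_half (R : realType) (n kE kF : nat -> nat) : Prop :=
  forall (delta : R), 0 < delta -> forall N : nat,
  exists i1 i1' : nat,
    [/\ (N <= i1')%N && (1 <= i1')%N, (i1' < i1)%N,
        1 - tail_prod R n kE i1' < delta,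
        (pprod (fun i => n i + kE i) i1' %| pprod (fun i => n i + kF i) i1)%N
      & (1 : R) < ((pprod (fun i => n i + kF i) i1')%:R / (pprod (fun i => n i + kE i) i1')%:R)
            * ((\prod_(i1' <= i < i1) (n i + kF i))%N%:R / (\prod_(i1' <= i < i1) n i)%N%:R)].

Definition sufficiently_close (R : realType) (n kE kF : nat -> nat) : Prop :=
  suff_close_half R n kE kF /\ suff_close_half R n kF kE.

From HB Require Import structures.
From mathcomp Require Import all_boot all_order all_algebra.
From mathcomp Require Import all_classical all_reals all_analysis.
Import Order.TTheory GRing.Theory Num.Theory.
Import numFieldNormedType.Exports.
Local Open Scope classical_set_scope.
Local Open Scope ring_scope.

(* Given delta and N, pick i' >= N whose E-tail product is within delta of 1.
   Equality of the supernatural numbers makes the finite product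
   A_i' = prod_{j<i'} (n_j + kE_j) divide B_i = prod_{j<i} (n_j + kF_j) for all
   large i, one prime power at a time, and A_i / B_i -> 1 < (n_i' + kE_i') / n_i'
   gives A_i n_i' < (n_i' + kE_i') B_i for all large i.  Any such i works, because
   prod_{i'<j<i} n_j <= prod_{i'<j<i} (n_j + kE_j).  The second half is the same
   argument with E and F exchanged, using B_i / A_i -> 1. *)

Lemma prodn_nat_gt0 (F : nat -> nat) m m' :
  (forall i, (m <= i)%N -> (0 < F i)%N) -> (0 < \prod_(m <= i < m') F i)%N.
Proof.
move=> F_gt0; rewrite big_nat_cond; apply: prodn_cond_gt0 => i.
by case/andP=> /andP[le_mi _] _; exact: F_gt0.
Qed.

Lemma pprod_gt0 (a : nat -> nat) m :
  (forall i, (1 <= i)%N -> (0 < a i)%N) -> (0 < pprod a m)%N.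
Proof. exact: prodn_nat_gt0. Qed.

Lemma pprod_cat (a : nat -> nat) m m' :
  (1 <= m <= m')%N -> pprod a m' = (pprod a m * \prod_(m <= i < m') a i)%N.
Proof. by move=> /andP[m_ge1 le_mm']; rewrite /pprod -big_cat_nat. Qed.

Lemma dvdn_pprod (a : nat -> nat) m m' : (m <= m')%N -> (pprod a m %| pprod a m')%N.
Proof.
case: m => [|m] le_mm'; first by rewrite /pprod big_geq // dvd1n.
by rewrite (@pprod_cat a m.+1 m') ?le_mm' // dvdn_mulr.
Qed.

Lemma near_all_in {T : Type} {I : choiceType} (F : set_system T) (s : seq I)
    (P : I -> T -> Prop) :
  Filter F -> (forall i, i \in s -> \forall x \near F, P i x) ->
  \forall x \near F, forall i, i \in s -> P i x.
Proof.
move=> FF sP.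
have : \forall x \near F, forall i : seq_sub s, P (val i) x.
  by apply: filter_forall => -[i si]; exact: sP.
by apply: filterS => x Px i si; exact: (Px (SeqSub si)).
Qed.

Definition supernat_le (a b : nat -> nat) : Prop :=
  forall p e : nat, prime p -> supernat_dvd (p ^ e) a -> supernat_dvd (p ^ e) b.

Lemma supernat_dvd_near (d : nat) (b : nat -> nat) :
  supernat_dvd d b -> \forall m \near \oo, (d %| pprod b m)%N.
Proof.
by move=> [m0 dvd_d]; exists m0 => // m /= le_m0m; apply/(dvdn_trans dvd_d)/dvdn_pprod.
Qed.

Lemma supernat_le_near (a b : nat -> nat) i :
  (forall j, (1 <= j)%N -> (0 < a j)%N) -> supernat_le a b ->
  \forall m \near \oo, (pprod a i %| pprod b m)%N.
Proof.
move=> a_gt0 le_ab; set d := pprod a i.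
have d_gt0 : (0 < d)%N by exact: pprod_gt0.
have : \forall m \near \oo, forall p, p \in primes d -> (d`_p %| pprod b m)%N.
  apply: near_all_in => p; rewrite mem_primes => /and3P[p_prime _ _].
  apply/supernat_dvd_near; rewrite p_part; apply: (le_ab _ _ p_prime).
  by exists i; rewrite -p_part dvdn_part.
by apply: filterS => m parts; apply/(dvdn_partP _ d_gt0) => p /parts.
Qed.

Definition pprod_ratio (R : numFieldType) (a b : nat -> nat) (m : nat) : R :=
  (pprod a m)%:R / (pprod b m)%:R.

Lemma pprod_ratio_lt_near (R : realFieldType) (a b : nat -> nat) (x y : nat) :
  (forall j, (1 <= j)%N -> (0 < b j)%N) -> (0 < y < x)%N ->
  pprod_ratio R a b m @[m --> \oo] --> (1 : R) ->
  \forall m \near \oo, (pprod a m * y < x * pprod b m)%N.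
Proof.
move=> b_gt0 /andP[y_gt0 lt_yx] ratio1.
have : 1 < x%:R / y%:R :> R by rewrite ltr_pdivlMr ?ltr0n // mul1r ltr_nat.
move=> /(cvgr_lt _ ratio1); apply: filterS => m.
rewrite /pprod_ratio ltr_pdivrMr ?ltr0n ?pprod_gt0 // mulrAC ltr_pdivlMr ?ltr0n //.
by rewrite -!natrM ltr_nat mulnC.
Qed.

Lemma pprod_tail_lt (n a b : nat -> nat) i' i :
  (1 <= i' < i)%N -> (0 < a i')%N -> (forall j, (n j <= a j)%N) ->
  (pprod a i * n i' < a i' * pprod b i)%N ->
  (pprod a i' * \prod_(i' <= j < i) n j < pprod b i)%N.
Proof.
move=> /andP[i'_ge1 lt_i'i] a_gt0 le_na.
have tail_le : (\prod_(i'.+1 <= j < i) n j <= \prod_(i'.+1 <= j < i) a j)%N.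
  by apply: leq_prod => j _; exact: le_na.
rewrite (@pprod_cat a i' i); last by rewrite i'_ge1 ltnW.
rewrite big_ltn // => lt_ab; rewrite big_ltn //.
apply: (@leq_ltn_trans (pprod a i' * (n i' * \prod_(i'.+1 <= j < i) a j))).
  by rewrite leq_mul2l leq_mul2l tail_le !orbT.
rewrite -(ltn_pmul2l a_gt0); apply: leq_ltn_trans lt_ab.
by rewrite mulnCA -!mulnA (mulnC (n i')).
Qed.

Lemma ltr1_nat_divM (R : numFieldType) (x y z w : nat) :
  (0 < x * y)%N -> (x * y < z * w)%N -> 1 < (z%:R / x%:R) * (w%:R / y%:R) :> R.
Proof.
move=> xy_gt0 lt_xy_zw; rewrite mulf_div -!natrM ltr_pdivlMr ?ltr0n //.
by rewrite mul1r ltr_nat.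
Qed.

Lemma suff_close_half_of (R : realType) (n kE kF : nat -> nat) :
  (forall i, (1 <= i)%N -> (0 < n i)%N) ->
  (forall i, (1 <= i)%N -> (0 < kE i)%N) ->
  tail_prod R n kE i @[i --> \oo] --> (1 : R) ->
  supernat_le (fun i => n i + kE i)%N (fun i => n i + kF i)%N ->
  pprod_ratio R (fun i => n i + kE i)%N (fun i => n i + kF i)%N i
    @[i --> \oo] --> (1 : R) ->
  suff_close_half R n kE kF.
Proof.
move=> n_gt0 kE_gt0 tail1 le_ab ratio1 delta delta_gt0 N.
set a := fun i => (n i + kE i)%N; set b := fun i => (n i + kF i)%N.
have a_gt0 i : (1 <= i)%N -> (0 < a i)%N by move/n_gt0; rewrite addn_gt0 => ->.
have b_gt0 i : (1 <= i)%N -> (0 < b i)%N by move/n_gt0; rewrite addn_gt0 => ->.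
have [i' [/andP[Ni' i'_ge1] tail_i']] : exists i',
    ((N <= i') && (1 <= i'))%N /\ 1 - tail_prod R n kE i' < delta.
  apply: (@filter_ex nat \oo); near=> i'; split.
    by apply/andP; split; near: i'; exact: nbhs_infty_ge.
  rewrite ltrBlDr -ltrBlDl; near: i'; apply: (cvgr_gt _ tail1).
  by rewrite gtrBl.
have lt_n_a : (0 < n i' < a i')%N by rewrite n_gt0 // -addn1 leq_add2l kE_gt0.
have [i [lt_i'i dvd_ab lt_ratio]] : exists i, [/\ (i' < i)%N,
    (pprod a i' %| pprod b i)%N & (pprod a i * n i' < a i' * pprod b i)%N].
  apply: (@filter_ex nat \oo); near=> i; split.
  - by near: i; exact: nbhs_infty_gt.
  - by near: i; exact: supernat_le_near a_gt0 le_ab.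
  - by near: i; exact: pprod_ratio_lt_near b_gt0 lt_n_a ratio1.
exists i, i'; split => //; first by rewrite Ni'.
apply: ltr1_nat_divM.
  rewrite muln_gt0 pprod_gt0 //; apply: prodn_nat_gt0 => j le_i'j.
  by rewrite n_gt0 // (leq_trans i'_ge1).
rewrite -pprod_cat ?i'_ge1 ?(ltnW lt_i'i) //.
by apply: pprod_tail_lt; rewrite ?i'_ge1 ?a_gt0 // => j; exact: leq_addr.
Unshelve. all: by end_near.
Qed.

Theorem lemma4p8 (R : realType) (n kE kF : nat -> nat) :
  (forall i, (1 <= i)%N -> (0 < n i)%N) ->
  (forall i, (1 <= i)%N -> (0 < kE i)%N) ->
  (forall i, (1 <= i)%N -> (0 < kF i)%N) ->
  tail_prod R n kE i @[i --> \oo] --> (1 : R) ->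
  tail_prod R n kF i @[i --> \oo] --> (1 : R) ->
  supernat_eq (fun i => n i + kE i)%N (fun i => n i + kF i)%N ->
  ((pprod (fun j => n j + kE j) i.+1)%:R / (pprod (fun j => n j + kF j) i.+1)%:R : R)
     @[i --> \oo] --> (1 : R) ->
  sufficiently_close R n kE kF.
Proof.
move=> n_gt0 kE_gt0 kF_gt0 tailE1 tailF1 eq_ab.
set a := fun i => (n i + kE i)%N; set b := fun i => (n i + kF i)%N.
rewrite -/(pprod_ratio R a b _) (cvg_shiftS (pprod_ratio R a b)) => ratio1.
split; apply: suff_close_half_of => //.
- by move=> p e /(eq_ab p e) [].
- by move=> p e /(eq_ab p e) [].
have -> : pprod_ratio R b a = (fun i => (pprod_ratio R a b i)^-1).
  by apply/funext => i; rewrite /pprod_ratio /= invf_div.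
by rewrite -[1 : R]invr1; apply: cvgV; rewrite ?oner_neq0.
Qed.
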